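(* Let $G$ be a finite $p$-group for some prime $p$. Then the poset $C(G)$ of cyclic subgroups of $G$ possesses a breaking point if and only if $G$ is either a cyclic $p$-group of order at least $p^2$, or a generalized quaternion $2$-group $Q_{2^n}$ for some $n\geq 3$.
   Context: For a finite group $G$, $C(G)$ denotes the set of cyclic subgroups of $G$, partially ordered by inclusion. A breaking point of $C(G)$ is a subgroup $H\in C(G)$ with $H\neq 1$ and $H\neq G$ such that for every $X\in C(G)$ we have $X\leq H$ or $H\leq X$. For $n\geq 3$, the generalized quaternion $2$-group is $Q_{2^n}=\langle a,b \mid a^{2^{n-2}}=b^2,\ a^{2^{n-1}}=1,\ b^{-1}ab=a^{-1}\rangle$, of order $2^n$. *)

From HB Require Import structures.
From mathcomp Require Import all_boot all_fingroup all_solvable.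
Set Implicit Arguments. Unset Strict Implicit. Unset Printing Implicit Defensive.
Local Open Scope group_scope.

Definition breaking_point (gT : finGroupType) (G H : {group gT}) : Prop :=
  [/\ H \subset G, cyclic H, H :!=: 1, H :!=: G &
      forall X : {group gT}, X \subset G -> cyclic X ->
        X \subset H \/ H \subset X].

Definition has_breaking_point (gT : finGroupType) (G : {group gT}) : Prop :=
  exists H : {group gT}, breaking_point G H.

From HB Require Import structures.
From mathcomp Require Import all_boot all_fingroup all_solvable.
Set Implicit Arguments.
Unset Strict Implicit.
Unset Printing Implicit Defensive.
Local Open Scope group_scope.

(* A breaking point of C(G) must contain every element of order p, because
   otherwise it would lie inside a cyclic subgroup of order p and hence equal
   it.  So C(G) has a breaking point exactly when Omega_1(G) has order p and
   G is not itself of order p, Omega_1(G) then being a breaking point.  By the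
   classification of p-groups with a unique subgroup of order p, these are the
   cyclic and the generalized quaternion groups. *)

Lemma prime_card_sub_nontrivial (gT : finGroupType) (H K : {group gT}) :
  prime #|K| -> H \subset K -> H :!=: 1 -> K \subset H.
Proof.
move=> prK sHK ntH; have [//|] := prime_subgroupVti H prK.
by rewrite (setIidPl sHK) => H1; rewrite H1 eqxx in ntH.
Qed.

Section BreakingPoint.

Variables (gT : finGroupType) (p : nat) (G : {group gT}).
Hypotheses (p_pr : prime p) (pG : p.-group G).

Lemma Ohm1_sub_breaking_point (H : {group gT}) :
  breaking_point G H -> 'Ohm_1(G) \subset H.
Proof.
case=> sHG _ ntH _ bpH; rewrite (OhmE 1 pG) gen_subG expn1.
apply/subsetP=> x /LdivP[Gx xp1].
have [|sHx] : <[x]> \subset H \/ H \subset <[x]>.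
- by apply: bpH; rewrite ?cycle_subG ?cycle_cyclic.
- by rewrite cycle_subG.
have ox : #|<[x]>| = p.
  apply/(prime_nt_dvdP p_pr); last by rewrite -orderE order_dvdn xp1.
  by rewrite -trivg_card1; apply: contraNneq ntH => x1; rewrite -subG1 -x1.
by rewrite -cycle_subG prime_card_sub_nontrivial ?ox.
Qed.

Lemma card_Ohm1_breaking_point (H : {group gT}) :
  breaking_point G H -> #|'Ohm_1(G)| = p.
Proof.
move=> bpH; have sOH := Ohm1_sub_breaking_point bpH.
case: bpH => sHG cycH ntH _ _.
have <- : 'Ohm_1(H) = 'Ohm_1(G).
  by apply/eqP; rewrite eqEsubset OhmS //= -{1}(Ohm_id 1 G) OhmS.
exact: Ohm1_cyclic_pgroup_prime cycH (pgroupS sHG pG) ntH.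
Qed.

Lemma Ohm1_sub_nontrivial (X : {group gT}) :
  #|'Ohm_1(G)| = p -> X \subset G -> X :!=: 1 -> 'Ohm_1(G) \subset X.
Proof.
move=> oO sXG ntX; apply: subset_trans (Ohm_sub 1 X).
by apply: prime_card_sub_nontrivial; rewrite ?oO ?OhmS ?Ohm1_eq1.
Qed.

Lemma Ohm1_breaking_point :
  #|'Ohm_1(G)| = p -> #|G| != p -> breaking_point G 'Ohm_1(G).
Proof.
move=> oO nGp; split.
- exact: Ohm_sub.
- by rewrite prime_cyclic ?oO.
- by rewrite -cardG_gt1 oO prime_gt1.
- by apply: contraNneq nGp => <-; rewrite oO.
move=> X sXG _; have [->|ntX] := eqVneq X 1%G; first by left; exact: sub1G.
by right; apply: Ohm1_sub_nontrivial.
Qed.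

Lemma has_breaking_pointP :
  has_breaking_point G <-> #|'Ohm_1(G)| = p /\ #|G| != p.
Proof.
split=> [[H bpH] | [oO nGp]]; last by exists 'Ohm_1(G)%G; apply: Ohm1_breaking_point.
split; first exact: card_Ohm1_breaking_point bpH.
case: bpH => sHG _ ntH nHG _; apply/eqP=> oG.
by case/eqP: nHG; apply/eqP; rewrite eqEsubset sHG prime_card_sub_nontrivial ?oG.
Qed.

Lemma pgroup_sqr_leq_card :
  (p ^ 2 <= #|G|)%N = (G :!=: 1) && (#|G| != p).
Proof.
have p_gt1 := prime_gt1 p_pr; have [k oG] := p_natP pG.
rewrite trivg_card1 oG leq_exp2l //.
case: k {oG} => [|[|k]]; rewrite ?expn0 ?expn1 ?eqxx ?andbF //.
have lt_p : p < p ^ k.+2 by rewrite -{1}(expn1 p) ltn_exp2l.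
by rewrite !gtn_eqF // (ltn_trans p_gt1).
Qed.

Lemma quaternion_pgroup n :
  (2 < n)%N -> G \isog 'Q_(2 ^ n) -> p = 2 /\ #|G| = (2 ^ n)%N.
Proof.
move=> n_gt2 isoG; have oG : #|G| = (2 ^ n)%N by rewrite (card_isog isoG) card_quaternion.
split=> //; apply/eqP; rewrite -dvdn_prime2 //.
have ntG : G :!=: 1 by rewrite -cardG_gt1 oG -{1}(expn0 2) ltn_exp2l // (ltn_trans _ n_gt2).
have [_ pdvG _] := pgroup_pdiv pG ntG.
by move: pdvG; rewrite oG Euclid_dvdX // => /andP[].
Qed.

Lemma card_Ohm1_prime_classP :
  #|'Ohm_1(G)| = p /\ #|G| != p <->
  (cyclic G /\ (p ^ 2 <= #|G|)%N) \/ (exists n, (3 <= n)%N /\ G \isog 'Q_(2 ^ n)).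
Proof.
split=> [[oO nGp] | [[cycG] | [n [n_gt2 isoG]]]].
- have ntG : G :!=: 1 by rewrite -Ohm1_eq1 -cardG_gt1 oO prime_gt1.
  have /orP[cycG | /andP[_ /eqP/quaternion_classP[n n_gt2 isoG]]] :=
    introT (prime_Ohm1P pG ntG) oO.
    by left; rewrite pgroup_sqr_leq_card ntG.
  by right; exists n.
- rewrite pgroup_sqr_leq_card => /andP[ntG nGp].
  by split=> //; apply/(prime_Ohm1P pG ntG); rewrite cycG.
have [p2 oG] := quaternion_pgroup n_gt2 isoG.
have : (p ^ 2 <= #|G|)%N by rewrite oG p2 leq_exp2l // ltnW.
rewrite pgroup_sqr_leq_card => /andP[ntG nGp]; split=> //.
apply/(prime_Ohm1P pG ntG); rewrite p2 eqxx /=.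
by apply/orP; right; apply/eqP/quaternion_classP; exists n.
Qed.

End BreakingPoint.

Theorem lemma2p1 (gT : finGroupType) (G : {group gT}) (p : nat)
  (p_pr : prime p) (pG : p.-group G) :
  has_breaking_point G <->
  ((cyclic G /\ (p ^ 2 <= #|G|)%N) \/
   (exists n : nat, (3 <= n)%N /\ G \isog 'Q_(2 ^ n))).
Proof.
exact: iff_trans (has_breaking_pointP p_pr pG) (card_Ohm1_prime_classP p_pr pG).
Qed.
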